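(* Let $\Omega\subset\mathbb{C}$ be a Carathéodory domain and $\varphi$ a subharmonic function on $\mathbb{C}$. Suppose $P$ is a holomorphic polynomial with $\int_\Omega|P|^2e^{-\varphi}d\lambda<\infty$. Let $p\in\partial\Omega$ and let $\Delta\subset\mathbb{C}\setminus\Omega$ be a disc with $p\in\partial\Delta$. Then for every $\varepsilon>0$ there is a function $\widetilde P$ holomorphic on a neighborhood of $\overline{\Omega}$ with $\widetilde P(p)=0$ and $\int_\Omega|\widetilde P-P|^2e^{-\varphi}d\lambda<\varepsilon$.
   Context: A Carathéodory domain is a simply-connected bounded domain $\Omega\subset\mathbb{C}$ whose boundary is also the boundary of an unbounded domain. $d\lambda$ is Lebesgue measure. *)

From HB Require Import structures.
From mathcomp Require Import all_boot all_order all_algebra.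
From mathcomp Require Import all_classical all_reals all_analysis.
From mathcomp Require Import complex.
Set Implicit Arguments. Unset Strict Implicit. Unset Printing Implicit Defensive.
Import Order.TTheory GRing.Theory Num.Theory numFieldNormedType.Exports.
Import ComplexField Normc.
Local Open Scope classical_set_scope.
Local Open Scope ring_scope.
Local Open Scope complex_scope.

Section Defs.
Variable R : realType.

Notation C := (R[i])^o.

Definition boundary (A : set C) : set C := closure A `&` closure (~` A).

Definition domain (A : set C) : Prop := A !=set0 /\ open A /\ connected A.

Definition simply_connected (A : set C) : Prop :=
  connected A /\
  forall g : R -> C,
    {within `[0, 1]%classic, continuous g} ->
    (forall t, `[0, 1]%classic t -> A (g t)) ->
    g 0 = g 1 ->
    exists H : R * R -> C,
      {within (`[0, 1]%classic `*` `[0, 1]%classic), continuous H} /\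
      (forall s t, `[0, 1]%classic s -> `[0, 1]%classic t -> A (H (s, t))) /\
      (forall t, `[0, 1]%classic t -> H (0, t) = g t /\ H (1, t) = g 0) /\
      (forall s, `[0, 1]%classic s -> H (s, 0) = g 0 /\ H (s, 1) = g 0).

Definition caratheodory_domain (Om : set C) : Prop :=
  domain Om /\ simply_connected Om /\ bounded_set Om /\
  exists U : set C, domain U /\ ~ bounded_set U /\ boundary U = boundary Om.

Definition disc (c : C) (r : R) : set C := [set z | normc (z - c) < r].

Definition holomorphic_on (U : set C) (f : C -> C) : Prop :=
  open U /\ forall z, U z -> derivable f z 1.

Definition usc (f : C -> \bar R) : Prop :=
  forall z (c : R), (f z < c%:E)%E -> \forall w \near z, (f w < c%:E)%E.

Definition subharmonic (phi : C -> \bar R) : Prop :=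
  (forall z, (phi z < +oo)%E) /\ usc phi /\
  forall (z : C) (r : R), 0 < r ->
    (phi z <= ((2 * pi)^-1)%R%:E *
       \int[@lebesgue_measure R]_(t in `[0%R, (2 * pi)%R]%classic)
          phi (z + ((r * cos t)%R +i* (r * sin t)%R))%R)%E.

Definition ofR2 (xy : R * R) : C := xy.1 +i* xy.2.

Definition lambda2 := (@lebesgue_measure R \x @lebesgue_measure R)%E.

Definition weighted_L2 (phi : C -> \bar R) (Om : set C) (f : C -> C) : \bar R :=
  (\int[lambda2]_(xy in ofR2 @^-1` Om)
     ((normc (f (ofR2 xy)) ^+ 2)%R%:E * expeR (- phi (ofR2 xy))))%E.

End Defs.

From HB Require Import structures.
From mathcomp Require Import all_boot all_order all_algebra.
From mathcomp Require Import all_classical all_reals all_analysis.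
From mathcomp Require Import complex.
From mathcomp Require Import measurable_realfun lra ring.
Import Order.TTheory GRing.Theory Num.Theory numFieldNormedType.Exports.
Import ComplexField Normc.
Set Implicit Arguments. Unset Strict Implicit. Unset Printing Implicit Defensive.
Local Open Scope classical_set_scope.
Local Open Scope ring_scope.

(* Put w := p - c.  As Om is open and misses the disc, every z in Om has
   |z - c| > r >= |w| > 0, and c is not in the closure of Om.  Hence
     P~ z := P z (1 - (w / (z - c)) ^ N)
   is holomorphic off c, vanishes at p, and on Om
     |P~ - P|^2 e^-phi = q^N |P|^2 e^-phi   with   q := |w|^2 / |z - c|^2 in (0, 1).
   By dominated convergence (majorant |P|^2 e^-phi, whose integral is finite by
   hypothesis) this integral is < eps for N large.  The integrand is not known
   to be measurable, so the convergence is run on simple minorants of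
   |P|^2 e^-phi, whose integrals approximate its integral from below. *)

Lemma measurable_inv (R : realType) : measurable_fun setT (@GRing.inv R).
Proof.
rewrite -(setUv [set (0:R)]) setUC.
apply/measurable_funU => //; first exact: measurableC.
split; last exact: measurable_fun_set1.
apply: open_continuous_measurable_fun.
  by apply: closed_openC; apply: accessible_closed_set1; exact: hausdorff_accessible.
by move=> x /set_mem /= x0; apply: inv_continuous; exact/eqP.
Qed.

Lemma le_addr_mulr_max_div (R : realFieldType) (a b g : R) : 0 <= a -> 0 <= b ->
  0 < g <= 1 -> b + a <= a * g + Num.max a (b / g).
Proof.
move=> a0 b0 /andP[g0 g1]; have b_eq : b = g * (b / g) by rewrite mulrC divfK ?gt_eqF.
have t0 : 0 <= b / g by rewrite divr_ge0 // ltW.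
by rewrite [in X in X + _]b_eq; have [h|h] := leP a (b / g); nra.
Qed.

Section UpperIntegral.
Import HBNNSimple.
Context d (T : measurableType d) (R : realType) (mu : {measure set T -> \bar R}).
Local Open Scope ereal_scope.

(* No measurability is assumed: [\int] of a nonnegative function is the
   supremum of the integrals of its simple minorants. *)
Lemma le_integralT_ge0 (f g : T -> \bar R) : (forall x, 0 <= f x) ->
  (forall x, f x <= g x) -> \int[mu]_x f x <= \int[mu]_x g x.
Proof.
move=> f0 fg; have g0 x : 0 <= g x := le_trans (f0 x) (fg x).
rewrite !ge0_integralTE //; apply: ge_ereal_sup => _ [h hf <-].
by apply: ereal_sup_ubound; exists h => // x; exact: le_trans (hf x) (fg x).
Qed.

Lemma ge0_integralT_sintegral_approx (G : T -> \bar R) (e : R) :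
  (forall x, 0 <= G x) -> \int[mu]_x G x < +oo -> (0 < e)%R ->
  exists2 s : {nnsfun T >-> R}, (forall x, (s x)%:E <= G x) &
    \int[mu]_x G x - e%:E < sintegral mu s.
Proof.
move=> G0 Gfin e0.
have Ifin : \int[mu]_x G x \is a fin_num by rewrite ge0_fin_numE// integral_ge0.
have : \int[mu]_x G x - e%:E < \int[mu]_x G x by rewrite lteBlDr// lteDl.
rewrite [X in _ < X]ge0_integralTE// => /ereal_sup_gt[_ [s sG <-]] ?.
by exists s.
Qed.

Lemma integral_mul_expr_cvg0 (f q : T -> R) :
  mu.-integrable setT (EFin \o f) -> measurable_fun setT q ->
  (forall x, f x != 0%R -> (`|q x| < 1)%R) ->
  \int[mu]_x (f x * q x ^+ n)%:E @[n --> \oo] --> 0.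
Proof.
move=> intf mq q1.
have mf : measurable_fun setT f by apply/measurable_EFinP; exact: measurable_int intf.
have mfq n : measurable_fun setT (fun x => (f x * q x ^+ n)%:E).
  by apply/measurable_EFinP; apply: measurable_funM => //; exact: measurable_funX.
have fq_cvg0 : {ae mu, forall x, setT x -> (f x * q x ^+ n)%:E @[n --> \oo] --> 0}.
  apply: aeW => x _; have [->|fx0] := eqVneq (f x) 0%R.
    by under eq_fun do rewrite mul0r; exact: cvg_cst.
  apply: cvg_EFin; first exact: nearW.
  by rewrite -(mulr0 (f x)); apply: cvgMl_tmp; exact: cvg_expr (q1 _ fx0).
have fq_le : {ae mu, forall x n, setT x -> `|(f x * q x ^+ n)%:E| <= (abse \o EFin \o f) x}.
  apply: aeW => x n _; rewrite /= lee_fin normrM normrX.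
  have [->|fx0] := eqVneq (f x) 0%R; first by rewrite normr0 mul0r.
  by rewrite ler_piMr// exprn_ile1// ltW// q1.
have [_ _] := dominated_convergence measurableT mfq (measurable_cst 0) fq_cvg0
  (integrable_abse intf) fq_le.
by rewrite integral0.
Qed.

Lemma ge0_integral_leD (f g h k : T -> R) :
  measurable_fun setT f -> measurable_fun setT g ->
  measurable_fun setT h -> measurable_fun setT k ->
  (forall x, 0 <= f x)%R -> (forall x, 0 <= g x)%R ->
  (forall x, 0 <= h x)%R -> (forall x, 0 <= k x)%R ->
  (forall x, f x + g x <= h x + k x)%R ->
  \int[mu]_x (f x)%:E + \int[mu]_x (g x)%:E <= \int[mu]_x (h x)%:E + \int[mu]_x (k x)%:E.
Proof.
move=> mf mg mh mk f0 g0 h0 k0 fg_hk.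
rewrite -!ge0_integralD //; try (by move=> x _; rewrite lee_fin); try exact/measurable_EFinP.
apply: ge0_le_integral => //.
- by move=> x _; rewrite adde_ge0 ?lee_fin.
- by apply: emeasurable_funD; exact/measurable_EFinP.
- by apply: emeasurable_funD; exact/measurable_EFinP.
- by move=> x _; rewrite -!EFinD lee_fin.
Qed.

Lemma integral_nnsfun_le_mul (G : T -> \bar R) (g : T -> R) (s0 s : {nnsfun T >-> R}) :
  (forall x, 0 <= G x) -> measurable_fun setT g ->
  (forall x, G x != 0 -> 0 < g x <= 1)%R ->
  (forall x, (s0 x)%:E <= G x) -> (forall x, (s x)%:E <= (g x)%:E * G x) ->
  \int[mu]_x (s x)%:E + \int[mu]_x (s0 x)%:E <=
    \int[mu]_x (s0 x * g x)%:E + \int[mu]_x G x.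
Proof.
move=> G0 mg g01 s0G sgG.
have s0_ge0 x : (0 <= s0 x)%R := fun_ge0 x.
have s_ge0 x : (0 <= s x)%R := fun_ge0 x.
have s_s0_G0 x : G x = 0 -> s x = 0%R /\ s0 x = 0%R.
  move=> Gx0; move: (sgG x) (s0G x); rewrite Gx0 mule0 !lee_fin => sx s0x.
  by split; apply/eqP; rewrite eq_le ?sx ?s0x ?s_ge0 ?s0_ge0.
(* [m] dominates [s0] and [s / g] yet stays below [G]; hence [s + s0 <= s0 g + m]. *)
pose m x := Num.max (s0 x) (s x / g x)%R.
have m_ge0 x : (0 <= m x)%R by rewrite le_max s0_ge0.
have m_le_G x : (m x)%:E <= G x.
  have [Gx0|/g01/andP[gx0 _]] := eqVneq (G x) 0.
    by rewrite /m; have [-> ->] := s_s0_G0 x Gx0; rewrite mul0r maxxx Gx0.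
  rewrite EFin_max ge_max s0G /=.
  move: (sgG x) (G0 x); case: (G x) => [y| |] //=; rewrite ?leey// !lee_fin.
  by move=> sy _; rewrite ler_pdivrMr// mulrC.
have s0g_ge0 x : (0 <= s0 x * g x)%R.
  have [Gx0|/g01/andP[gx0 _]] := eqVneq (G x) 0.
    by have [_ ->] := s_s0_G0 x Gx0; rewrite mul0r.
  by rewrite mulr_ge0 // ltW.
apply: le_trans (leeD2l _ (le_integralT_ge0 _ m_le_G)); last by move=> x; rewrite lee_fin.
apply: (ge0_integral_leD (measurable_funPT s) (measurable_funPT s0)) => //.
- by apply: measurable_funM => //; exact: measurable_funPT.
- apply: measurable_maxr; first exact: measurable_funPT.
  apply: measurable_funM; first exact: measurable_funPT.
  exact: measurableT_comp (@measurable_inv R) mg.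
- move=> x; have [Gx0|/g01] := eqVneq (G x) 0.
    by rewrite /= /m; have [-> ->] := s_s0_G0 x Gx0; rewrite !mul0r maxxx.
  exact: le_addr_mulr_max_div.
Qed.

Lemma ge0_integral_expr_mul_lt (G : T -> \bar R) (q : T -> R) (e : R) :
  (forall x, 0 <= G x) -> \int[mu]_x G x < +oo -> measurable_fun setT q ->
  (forall x, G x != 0 -> 0 < q x < 1)%R -> (0 < e)%R ->
  exists N : nat, \int[mu]_x ((q x ^+ N)%:E * G x) < e%:E.
Proof.
move=> G0 Gfin mq q01 e0; pose del := (e / 3)%R.
have del0 : (0 < del)%R by rewrite divr_gt0.
have [s0 s0G s0_approx] := ge0_integralT_sintegral_approx G0 Gfin del0.
have s0_fin : sintegral mu s0 \is a fin_num.
  rewrite ge0_fin_numE ?sintegral_ge0// -integralT_nnsfun.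
  by apply: le_lt_trans Gfin; apply: le_integralT_ge0 => // x; rewrite lee_fin.
have s0_int : mu.-integrable setT (EFin \o s0).
  apply/integrableP; split; first exact/measurable_EFinP.
  under eq_integral do rewrite gee0_abs ?lee_fin//.
  by rewrite integralT_nnsfun -ge0_fin_numE ?sintegral_ge0.
have s0_q1 x : s0 x != 0%R -> (`|q x| < 1)%R.
  move=> s0x0; have /q01/andP[qx0 qx1] : G x != 0.
    by rewrite gt_eqF// (lt_le_trans _ (s0G x))// lte_fin lt_def s0x0/=.
  by rewrite gtr0_norm.
have [N _ s0qN_lt] : \forall N \near \oo, \int[mu]_x (s0 x * q x ^+ N)%:E < del%:E.
  by apply: integral_mul_expr_cvg0 s0_int mq s0_q1 _ (open_ereal_lt' _); rewrite lte_fin.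
exists N; rewrite ge0_integralTE; last first.
  move=> x; have [->|/q01/andP[qx0 _]] := eqVneq (G x) 0; first by rewrite mule0.
  by rewrite mule_ge0// lee_fin exprn_ge0// ltW.
apply: (@le_lt_trans _ _ (del + del)%:E); last by rewrite lte_fin /del; lra.
apply: ge_ereal_sup => _ [s sqG <-].
have qN01 x : G x != 0 -> (0 < q x ^+ N <= 1)%R.
  by move=> /q01/andP[qx0 qx1]; rewrite exprn_gt0//= exprn_ile1// ltW.
have := integral_nnsfun_le_mul G0 (measurable_funX N mq) qN01 s0G sqG.
rewrite !integralT_nnsfun -leeBrDr// => s_le; apply: le_trans s_le _.
rewrite -addeA EFinD; apply: leeD; first exact: ltW (s0qN_lt _ (leqnn N)).
by rewrite leeBlDr// addeC ltW// -lteBlDr.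
Qed.
End UpperIntegral.

Section Disc.
Variable R : realType.
Notation C := (R[i])^o.
Local Open Scope complex_scope.

Lemma normc_ge0 (x : C) : 0 <= normc x.
Proof. by case: x => a b; exact: sqrtr_ge0. Qed.

Lemma normc_real (a : R) : normc a%:C = `|a|.
Proof. by rewrite /normc /= expr0n /= addr0 sqrtr_sqr. Qed.

Lemma normcX (x : C) n : normc (x ^+ n) = normc x ^+ n.
Proof. by elim: n => [|n IHn]; rewrite ?normc1 // !exprS normcM IHn. Qed.

Lemma ball_normc (x y : C) (e : R) : ball x e%:C y <-> normc (x - y) < e.
Proof. by rewrite -ball_normE /ball_ /= ltcR. Qed.

Lemma nbhs_normc (x : C) (A : set C) : nbhs x A ->
  exists2 e : R, 0 < e & forall y, normc (x - y) < e -> A y.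
Proof.
move=> /nbhs_ballP [e e0 eA].
have /andP[/eqP Ime0 Ree0] : (complex.Im e == complex.Im 0) && (complex.Re 0 < complex.Re e).
  by rewrite -ltcE.
exists (complex.Re e) => // y /ball_normc xy; apply: eA.
by case: e Ime0 {e0 Ree0} xy => a b /= ->.
Qed.

Lemma closure_normc (A : set C) (x : C) (e : R) : closure A x -> 0 < e ->
  exists2 y, A y & normc (x - y) < e.
Proof.
move=> Ax e0; have [|y [Ay xy]] := Ax [set y | normc (x - y) < e].
  by apply/nbhs_ballP; exists e%:C => [|y /ball_normc//]; rewrite /= ltcR.
by exists y.
Qed.

Lemma closure_disc (c z : C) (r : R) : 0 < r -> normc (z - c) <= r ->
  closure (disc c r) z.
Proof.
move=> r0 zc A /nbhs_normc [e e0 eA].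
pose t := Num.min 1 (e / (2 * r)).
have t0 : 0 < t by rewrite lt_min ltr01 divr_gt0 // mulr_gt0.
have t1 : t <= 1 by rewrite ge_min lexx.
have tr : t <= e / (2 * r) by rewrite ge_min lexx orbT.
have zc0 := normc_ge0 (z - c).
exists (c + (1 - t)%:C * (z - c)); split.
  rewrite /disc /= (_ : _ - c = (1 - t)%:C * (z - c)); last by ring.
  by rewrite normcM normc_real ger0_norm ?subr_ge0 //; nra.
apply: eA; rewrite (_ : z - _ = t%:C * (z - c)); last by rewrite rmorphB rmorph1; ring.
rewrite normcM normc_real ger0_norm ?ltW //.
have : e / (2 * r) * r = e / 2 by field; rewrite gt_eqF.
by nra.
Qed.

Lemma open_disjoint_disc_gt (Om : set C) (c z : C) (r : R) : 0 < r -> open Om ->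
  disc c r `<=` ~` Om -> Om z -> r < normc (z - c).
Proof.
move=> r0 oOm dOm Omz; rewrite ltNge; apply/negP => zc.
have : closure (disc c r) `<=` ~` Om.
  by rewrite [X in _ `<=` X](closure_id _).1; [exact: closureS dOm | exact: open_closedC].
by move/(_ z (closure_disc r0 zc)).
Qed.

Lemma boundary_disc (c p : C) (r : R) : 0 < r -> boundary (disc c r) p ->
  p != c /\ normc (p - c) <= r.
Proof.
move=> r0 [in_p out_p]; split.
  apply/eqP => pc; have [y ny py] := closure_normc out_p r0.
  by apply: ny; rewrite /disc /= -normcN opprB -pc.
rewrite leNgt; apply/negP => rp.
have [y dy py] : exists2 y, disc c r y & normc (p - y) < normc (p - c) - r.
  by apply: closure_normc in_p _; rewrite subr_gt0.
have := le_normcD (p - y) (y - c); rewrite (_ : p - y + (y - c) = p - c); last by ring.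
by move: dy; rewrite /disc /=; lra.
Qed.

Lemma disc_center_notin_closure (Om : set C) (c : C) (r : R) : 0 < r ->
  disc c r `<=` ~` Om -> ~ closure Om c.
Proof.
move=> r0 dOm /closure_normc /(_ r0) [y Omy cy].
by apply: (dOm y) => //; rewrite /disc /= -normcN opprB.
Qed.
End Disc.

Section Damping.
Variable R : realType.
Notation C := (R[i])^o.

Definition damped_poly (P : {poly R[i]}) (c p : C) (N : nat) (z : C) : C :=
  P.[z] * (1 - ((p - c) / (z - c)) ^+ N).

Lemma derivable_horner (P : {poly R[i]}) (z : C) :
  derivable (fun x : C => P.[x] : C) z 1.
Proof.
elim/poly_ind: P => [|P a IHP].
  have -> : (fun x : C => (0 : {poly R[i]}).[x] : C) = cst 0.
    by apply/funext => x; rewrite horner0.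
  exact: derivable_cst.
have -> : (fun x : C => (P * 'X + a%:P).[x] : C) =
    (fun x : C => P.[x] : C) * id + cst a.
  by apply/funext => x; rewrite hornerMXaddC.
apply: (@derivableD _ C C); last exact: derivable_cst.
apply: (@derivableM _ C); first exact: IHP.
exact: (@derivable_id _ C).
Qed.

Lemma derivable_damped_poly (P : {poly R[i]}) (c p : C) (N : nat) (z : C) :
  z != c -> derivable (damped_poly P c p N) z 1.
Proof.
move=> zc; have -> : damped_poly P c p N = (fun x : C => P.[x] : C) *
    (cst 1 - (cst (p - c) * (fun x : C => (x - c)^-1 : C)) ^+ N).
  by apply/funext => x; rewrite !fctE.
apply: (@derivableM _ C); first exact: derivable_horner.
apply: (@derivableB _ C C); first exact: derivable_cst.
apply: (@derivableX _ C); apply: (@derivableM _ C); first exact: derivable_cst.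
apply: (@derivableV _ C); first by rewrite subr_eq0.
by apply: (@derivableB _ C C); [exact: (@derivable_id _ C) | exact: derivable_cst].
Qed.

Lemma damped_poly_root (P : {poly R[i]}) (c p : C) (N : nat) :
  p != c -> damped_poly P c p N p = 0.
Proof. by move=> pc; rewrite /damped_poly divff ?subr_eq0 // expr1n subrr mulr0. Qed.

Lemma sqr_normc_damped_poly_sub (P : {poly R[i]}) (c p : C) (N : nat) (z : C) :
  normc (damped_poly P c p N z - P.[z]) ^+ 2 =
  (normc (p - c) ^+ 2 / normc (z - c) ^+ 2) ^+ N * normc P.[z] ^+ 2.
Proof.
rewrite /damped_poly mulrBr mulr1 addrAC subrr add0r normcN normcM normcX.
by rewrite normcM normcV exprMn -!exprM mulnC !exprM -expr_div_n mulrC.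
Qed.

Lemma sqr_normc_ofR2_sub (c : C) (xy : R * R) :
  normc (ofR2 xy - c) ^+ 2 = (xy.1 - complex.Re c) ^+ 2 + (xy.2 - complex.Im c) ^+ 2.
Proof. by case: c xy => a b [x y]; rewrite /normc sqr_sqrtr // addr_ge0 // sqr_ge0. Qed.

Lemma measurable_damping_ratio (c w : C) :
  measurable_fun setT (fun xy : R * R => normc w ^+ 2 / normc (ofR2 xy - c) ^+ 2).
Proof.
apply: measurable_funM => //; apply: measurableT_comp (@measurable_inv R) _.
under eq_fun do rewrite sqr_normc_ofR2_sub.
by apply: measurable_funD; apply: measurable_funX; exact: measurable_funB.
Qed.

Lemma damping_ratio_gt0_lt1 (c p z : C) (r : R) : p != c ->
  normc (p - c) <= r -> r < normc (z - c) ->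
  0 < normc (p - c) ^+ 2 / normc (z - c) ^+ 2 < 1.
Proof.
move=> pc pcr zc.
have zc0 : 0 < normc (z - c) := le_lt_trans (normc_ge0 _) (le_lt_trans pcr zc).
have pc0 : 0 < normc (p - c).
  by rewrite lt_def normc_ge0 andbT; apply: contra pc => /eqP/eq0_normc/eqP; rewrite subr_eq0.
rewrite divr_gt0 ?exprn_gt0 //= ltr_pdivrMr ?exprn_gt0 // mul1r.
by rewrite ltr_pXn2r ?nnegrE ?normc_ge0 // (le_lt_trans pcr zc).
Qed.
End Damping.

Theorem theorem4p4 (R : realType) (Om : set (R[i])^o) (phi : (R[i])^o -> \bar R)
  (P : {poly R[i]}) (p c : (R[i])^o) (r : R) :
  caratheodory_domain Om ->
  subharmonic phi ->
  (weighted_L2 phi Om (fun z => P.[z]) < +oo)%E ->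
  boundary Om p ->
  0 < r -> disc c r `<=` ~` Om -> boundary (disc c r) p ->
  forall eps : R, 0 < eps ->
  exists (U : set (R[i])^o) (Pt : (R[i])^o -> (R[i])^o),
    open U /\ closure Om `<=` U /\ holomorphic_on U Pt /\
    Pt p = 0 /\
    (weighted_L2 phi Om (fun z => (Pt z - P.[z])%R) < eps%:E)%E.
Proof.
move=> [[_ [oOm _]] _] _ P_L2 _ r0 dOm bdisc eps eps0.
have [pc pcr] := boundary_disc r0 bdisc.
pose q xy := normc (p - c) ^+ 2 / normc (ofR2 xy - c) ^+ 2.
pose G := (fun xy => (normc P.[ofR2 xy] ^+ 2)%:E * expeR (- phi (ofR2 xy)))%E
  \_ (@ofR2 R @^-1` Om).
have G0 xy : (0 <= G xy)%E.
  by rewrite /G /patch; case: ifP => // _; rewrite mule_ge0 ?lee_fin ?sqr_ge0 ?expeR_ge0.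
have G_L2 : (\int[@lambda2 R]_xy G xy < +oo)%E by rewrite -integral_mkcond.
have q01 xy : G xy != 0%E -> 0 < q xy < 1.
  rewrite /G /patch; case: ifPn => [/set_mem Omz _|_]; last by rewrite eqxx.
  exact: damping_ratio_gt0_lt1 pc pcr (open_disjoint_disc_gt r0 oOm dOm Omz).
have [N HN] := ge0_integral_expr_mul_lt (mu := @lambda2 R) G0 G_L2
  (measurable_damping_ratio c (p - c)) q01 eps0.
exists (~` [set c]), (damped_poly P c p N).
have oU : open (~` [set c]).
  by apply: closed_openC; apply: accessible_closed_set1; exact: hausdorff_accessible.
split; first exact: oU.
split; first by move=> z Omz zc; apply: disc_center_notin_closure r0 dOm _; rewrite -zc.
split; first by split; [exact: oU | move=> z /eqP; exact: derivable_damped_poly].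
split; first exact: damped_poly_root.
suff -> : weighted_L2 phi Om (fun z => damped_poly P c p N z - P.[z]) =
    (\int[@lambda2 R]_xy ((q xy ^+ N)%:E * G xy))%E by [].
rewrite /weighted_L2 integral_mkcond; apply: eq_integral => xy _.
rewrite /G /patch; case: ifP => _; last by rewrite mule0.
by rewrite muleA -EFinM sqr_normc_damped_poly_sub.
Qed.
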